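(* Let $q$ be a prime power, $t\ge1$, $s<t$ a nonnegative integer, $\{u_1,\dots,u_t\}$ an $\mathbb{F}_q$-basis of $\mathbb{F}_{q^t}$, $W$ an arbitrary $\mathbb{F}_q$-subspace of $\mathbb{F}_{q^t}$ of dimension $s$, and $\alpha^*\in\mathbb{F}_{q^t}$. Let $L_W(x)=\prod_{w\in W}(x-w)$ and $g_i(x)=L_W\big(u_i(x-\alpha^* )\big)/(x-\alpha^* )$ for $i=1,\dots,t$ (a polynomial, since $L_W(0)=0$). Then $\{g_1(\alpha^* ),\dots,g_t(\alpha^* )\}$ has rank $t$ over $\mathbb{F}_q$. *)

From HB Require Import structures.
From mathcomp Require Import all_boot all_algebra all_field.
Set Implicit Arguments. Unset Strict Implicit. Unset Printing Implicit Defensive.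
Import GRing.Theory.
Local Open Scope ring_scope.

(* F = F_q (a finite field), L = F_{q^t} a finite-dimensional extension of F.
   finvect_type L is L equipped with its canonical finType structure. *)

Definition subspace_poly (F : finFieldType) (L : fieldExtType F)
  (W : {vspace L}) : {poly L} :=
  \prod_(w : finvect_type L | (w : L) \in W) ('X - (w : L)%:P).

Definition g_poly (F : finFieldType) (L : fieldExtType F)
  (W : {vspace L}) (a u : L) : {poly L} :=
  (subspace_poly W \Po (u%:P * ('X - a%:P))) %/ ('X - a%:P).

From HB Require Import structures.
From mathcomp Require Import all_boot all_algebra all_field.
Import GRing.Theory.
Set Implicit Arguments. Unset Strict Implicit.
Local Open Scope ring_scope.

(* Since 0 is in W, L_W(x) = x Q(x) with Q(0) = prod_{0 <> w in W} (-w) <> 0.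
   Hence g_i(x) = u_i Q(u_i (x - a)) and g_i(a) = u_i Q(0): the values are the
   basis u multiplied by one nonzero constant, an F_q-linear bijection of F_{q^t}.
   Neither the dimension of W nor the hypothesis s < t plays a role. *)

Lemma divp_comp_mulX_XsubC (R : fieldType) (q : {poly R}) (a u : R) :
  (('X * q) \Po (u%:P * ('X - a%:P))) %/ ('X - a%:P) =
  u%:P * (q \Po (u%:P * ('X - a%:P))).
Proof.
rewrite comp_polyM comp_polyX [u%:P * _]mulrC -mulrA.
by rewrite mulKp ?polyXsubC_eq0.
Qed.

Lemma horner_divp_comp_mulX_XsubC (R : fieldType) (q : {poly R}) (a u : R) :
  ((('X * q) \Po (u%:P * ('X - a%:P))) %/ ('X - a%:P)).[a] = u * q.[0].
Proof.
by rewrite divp_comp_mulX_XsubC hornerM hornerC horner_comp hornerM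
  hornerXsubC subrr mulr0.
Qed.

Section SubspacePoly.

Variables (F : finFieldType) (L : fieldExtType F) (W : {vspace L}).

Definition nonzero_subspace_poly : {poly L} :=
  \prod_(w : finvect_type L | ((w : L) \in W) && (w != 0)) ('X - (w : L)%:P).

Lemma subspace_polyE : subspace_poly W = 'X * nonzero_subspace_poly.
Proof. by rewrite /subspace_poly (bigD1 (0 : finvect_type L)) ?mem0v //= subr0. Qed.

Lemma nonzero_subspace_poly0 :
  nonzero_subspace_poly.[0] =
  \prod_(w : finvect_type L | ((w : L) \in W) && (w != 0)) - (w : L).
Proof. by rewrite horner_prod; apply: eq_bigr => w _; rewrite hornerXsubC sub0r. Qed.

Lemma nonzero_subspace_poly0_neq0 : nonzero_subspace_poly.[0] != 0.
Proof.
rewrite nonzero_subspace_poly0 prodf_seq_neq0.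
by apply/allP => w _; apply/implyP => /andP[_]; rewrite oppr_eq0.
Qed.

Lemma horner_g_poly (a u : L) :
  (g_poly W a u).[a] = u * nonzero_subspace_poly.[0].
Proof. by rewrite /g_poly subspace_polyE horner_divp_comp_mulX_XsubC. Qed.

End SubspacePoly.

Lemma dim_span_mulr (F : fieldType) (L : fieldExtType F) (X : seq L) (c : L) :
  c != 0 -> \dim <<[seq x * c | x <- X]>> = \dim <<X>>.
Proof.
move=> c_neq0; rewrite -(dim_cosetv _ c_neq0) -limg_amulr limg_span.
by congr (\dim <<_>>); apply: eq_map => x; rewrite lfunE.
Qed.

Theorem lemma7 (F : finFieldType) (L : fieldExtType F) (t s : nat)
  (ht : \dim {: L} = t) (u : t.-tuple L) (hu : basis_of fullv u)
  (W : {vspace L}) (hW : \dim W = s) (hst : (s < t)%N) (a : L) :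
  \dim <<[seq (g_poly W a ui).[a] | ui <- u]>>%VS = t.
Proof.
rewrite (eq_map (horner_g_poly W a)) dim_span_mulr ?nonzero_subspace_poly0_neq0 //.
by case/andP: hu => /eqP -> _; rewrite ht.
Qed.
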